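(* Let $k \ge 1$. If $M$ is a simple matroid and $X \subseteq E(M)$, then every $k$-pseudoclaw of $M / X$ is a $k$-claw of $M$.
   Context: A claw of a matroid $N$ is a set that is both a flat and an independent set of $N$; a $k$-claw is a claw of size $k$. A simplification of a matroid $N$ is any matroid obtained from $N$ by deleting all loops and all but one element from each parallel class. A set $F$ is a $k$-pseudoclaw of $N$ if $F$ is a $k$-claw of some simplification of $N$. *)

From mathcomp Require Import all_boot all_order.
Set Implicit Arguments. Unset Strict Implicit. Unset Printing Implicit Defensive.

Section Matroids.
Variable T : finType.

Record matroid := Matroid { ground : {set T}; indep : pred {set T} }.

Definition is_matroid (M : matroid) : Prop :=
  [/\ forall I : {set T}, indep M I -> I \subset ground M,
      indep M set0,
      forall I J : {set T}, indep M J -> I \subset J -> indep M I &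
      forall I J : {set T}, indep M I -> indep M J -> #|I| < #|J| ->
        exists2 e, e \in J :\: I & indep M (e |: I)].

Definition rank (M : matroid) (A : {set T}) : nat :=
  \max_(I : {set T} | (I \subset A) && indep M I) #|I|.

Definition is_loop (M : matroid) (e : T) : bool :=
  (e \in ground M) && ~~ indep M [set e].

Definition parallel (M : matroid) (e f : T) : bool :=
  [&& e \in ground M, f \in ground M, e != f,
      ~~ is_loop M e, ~~ is_loop M f & ~~ indep M [set e; f]].

(* simple: no loops and no parallel pairs *)
Definition simple (M : matroid) : Prop :=
  forall e f : T, e \in ground M -> f \in ground M -> indep M [set e; f].

Definition delete (M : matroid) (D : {set T}) : matroid :=
  Matroid (ground M :\: D) (fun I => indep M I && (I \subset ground M :\: D)).

(* contraction M / X: I is independent iff I ⊆ E - X and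
   r(I ∪ X) = |I| + r(X) (equivalently, I ∪ B_X is independent for a basis
   B_X of X) *)
Definition contract (M : matroid) (X : {set T}) : matroid :=
  Matroid (ground M :\: X)
    (fun I => (I \subset ground M :\: X) &&
              (rank M (I :|: X) == #|I| + rank M X)).

(* N' is a simplification of N: N' = N \ D where D consists of all loops
   of N and all but one element of each parallel class of N. Parallel
   classes are the classes of non-loops under "equal or parallel". *)
Definition simplification_of (N N' : matroid) : Prop :=
  exists D : {set T},
    [/\ N' = delete N D, D \subset ground N,
        forall e : T, is_loop N e -> e \in D &
        forall e : T, e \in ground N -> ~~ is_loop N e ->
          #|[set f in ground N :\: D | (f == e) || parallel N f e]| = 1].

Definition flat (M : matroid) (F : {set T}) : Prop :=
  F \subset ground M /\
  forall e : T, e \in ground M :\: F -> rank M (e |: F) = (rank M F).+1.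

Definition claw (M : matroid) (k : nat) (F : {set T}) : Prop :=
  [/\ flat M F, indep M F & #|F| = k].

Definition pseudoclaw (N : matroid) (k : nat) (F : {set T}) : Prop :=
  exists2 N', simplification_of N N' & claw N' k F.

End Matroids.

(* F is independent in M / X, i.e. r(F u X) = |F| + r(X), and submodularity
   makes F independent in M.  For flatness, let e lie outside F with
   r(e + F) = |F|.  Submodularity on C u A and C u B gives, for independent C,
   r(A u B) + |C| <= r(C u A) + r(C u B); with A = F and B = X or a small
   enlargement of X this contradicts r(F u X) = |F| + r(X) when e lies in X,
   is a loop of M / X, or is parallel in M / X to an element f kept in the
   simplification (taking C = {e, f} if f is in F, and C = {e} otherwise).
   In the remaining case e is kept itself, and flatness of F in the
   simplification makes e + F independent in M / X, which is impossible.
   Simplicity of M is used only to know that {e} and {e, f} are independent. *)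
From mathcomp Require Import all_boot all_order.
From mathcomp Require Import zify.
Set Implicit Arguments. Unset Strict Implicit.

Section Rank.
Variables (T : finType) (M : matroid T).
Implicit Types (A B C I J : {set T}).

Lemma indep_leq_rank A I : indep M I -> I \subset A -> #|I| <= rank M A.
Proof.
move=> indepI subIA.
by apply: (leq_bigmax_cond (F := fun I : {set T} => #|I|)); rewrite subIA.
Qed.

Lemma rank_leq_card A : rank M A <= #|A|.
Proof. by apply/bigmax_leqP => I /andP[subIA _]; exact: subset_leq_card. Qed.

Lemma rank_mono A B : A \subset B -> rank M A <= rank M B.
Proof.
move=> subAB; apply/bigmax_leqP => I /andP[subIA indepI].
exact: indep_leq_rank indepI (subset_trans subIA subAB).
Qed.

Lemma rank_indep I : indep M I -> rank M I = #|I|.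
Proof.
by move=> indepI; apply/eqP; rewrite eqn_leq rank_leq_card indep_leq_rank.
Qed.

Hypothesis indep0 : indep M set0.

Lemma rank_witness A :
  exists2 I : {set T}, (I \subset A) && indep M I & #|I| = rank M A.
Proof.
have [|I PI maxI] := @arg_maxnP _ set0
  (fun I : {set T} => (I \subset A) && indep M I) (fun I : {set T} => #|I|).
  by rewrite sub0set indep0.
exists I => //; apply/eqP; rewrite eqn_leq.
rewrite (leq_bigmax_cond (F := fun I : {set T} => #|I|) _ PI) /=.
by apply/bigmax_leqP => J /maxI.
Qed.

Lemma indep_rankP I : reflect (#|I| <= rank M I) (indep M I).
Proof.
apply: (iffP idP) => [indepI | geI]; first by rewrite rank_indep.
have [J /andP[subJI indepJ] cardJ] := rank_witness I.
by have /eqP <- : J == I by rewrite eqEcard subJI cardJ.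
Qed.

Lemma flat_indep_setU1 F e :
  flat M F -> indep M F -> e \in ground M :\: F -> indep M (e |: F).
Proof.
move=> [_ rank_ext] indepF eEF; apply/indep_rankP.
rewrite rank_ext // rank_indep // cardsU1.
by case: (e \in F).
Qed.

End Rank.

Section MatroidRank.
Variables (T : finType) (M : matroid T).
Hypothesis matroidM : is_matroid M.
Implicit Types (A B C I J S : {set T}).

Lemma rank_setU1_leq x A : rank M (x |: A) <= (rank M A).+1.
Proof.
have [_ indep0 indep_sub _] := matroidM.
have [J /andP[subJ indepJ] <-] := rank_witness indep0 (x |: A).
have subJA : J :\ x \subset A.
  apply/subsetP => y; rewrite !inE => /andP[yx yJ].
  by move/subsetP: subJ => /(_ y yJ); rewrite !inE (negPf yx).
have := indep_leq_rank (indep_sub _ _ indepJ (subsetDl J [set x])) subJA.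
by rewrite (cardsD1 x J); case: (x \in J) => /=; lia.
Qed.

Lemma indep_extend S I : indep M I -> I \subset S ->
  exists J, [/\ I \subset J, J \subset S, indep M J & #|J| = rank M S].
Proof.
have [_ indep0 _ augment] := matroidM.
have [K /andP[subKS indepK] cardK] := rank_witness indep0 S.
move defn : (rank M S - #|I|) => n.
elim: n I defn => [|n IHn] I defn indepI subIS.
  exists I; split => //; apply/eqP; rewrite eqn_leq indep_leq_rank //=; lia.
have [|e /setDP[eK eI] indep_eI] := augment _ _ indepI indepK; first by lia.
have subeIS : e |: I \subset S by rewrite subUset sub1set (subsetP subKS).
have [|J [subeIJ subJS indepJ cardJ]] := IHn (e |: I) _ indep_eI subeIS.
  by rewrite cardsU1 eI; lia.
by exists J; split => //; apply: subset_trans subeIJ; exact: subsetUr.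
Qed.

Lemma rank_submod A B :
  rank M (A :|: B) + rank M (A :&: B) <= rank M A + rank M B.
Proof.
have [_ indep0 indep_sub _] := matroidM.
have [I /andP[subIAB indepI] <-] := rank_witness indep0 (A :&: B).
have [J [subIJ subJ indepJ <-]] := indep_extend indepI
  (subset_trans subIAB (subset_trans (subsetIl A B) (subsetUl A B))).
have JA := indep_leq_rank (indep_sub _ _ indepJ (subsetIl J A)) (subsetIr J A).
have JB := indep_leq_rank (indep_sub _ _ indepJ (subsetIl J B)) (subsetIr J B).
have splitJ : (J :&: A) :|: (J :&: B) = J.
  by rewrite -setIUr; apply/setIidPl.
have subI : I \subset (J :&: A) :&: (J :&: B).
  by rewrite setIACA setIid subsetI subIJ.
have := cardsUI (J :&: A) (J :&: B); rewrite splitJ.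
have := subset_leq_card subI; lia.
Qed.

Lemma rank_setU_leq A B : rank M (A :|: B) <= rank M A + rank M B.
Proof. exact: leq_trans (leq_addr _ _) (rank_submod A B). Qed.

Lemma rank_setU_indep_common A B C : indep M C ->
  rank M (A :|: B) + #|C| <= rank M (C :|: A) + rank M (C :|: B).
Proof.
move=> indepC; apply: leq_trans (rank_submod (C :|: A) (C :|: B)).
apply: leq_add.
  by apply: rank_mono; rewrite setUACA setUid subsetUr.
by apply: indep_leq_rank indepC _; rewrite subsetI !subsetUl.
Qed.

Variable X : {set T}.
Local Notation N := (contract M X).

Lemma contract_indep_indep I : indep N I -> indep M I.
Proof.
have [_ indep0 _ _] := matroidM.
case/andP=> _ /eqP rankIX; apply/(indep_rankP indep0).
by rewrite -(leq_add2r (rank M X)) -rankIX rank_setU_leq.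
Qed.

Lemma contract_dep_rank A : A \subset ground M :\: X -> ~~ indep N A ->
  rank M (A :|: X) < #|A| + rank M X.
Proof.
move=> subA; rewrite /= subA /= ltn_neqAle => ->.
exact: leq_trans (rank_setU_leq A X) (leq_add (rank_leq_card M A) (leqnn _)).
Qed.

Lemma contract_loop_rank e : is_loop N e -> rank M (e |: X) <= rank M X.
Proof.
case/andP=> eN dep_e.
by have := contract_dep_rank _ dep_e; rewrite sub1set cards1 ltnS; apply.
Qed.

Lemma contract_parallel_rank e f :
  parallel N f e -> rank M ([set f; e] :|: X) <= (rank M X).+1.
Proof.
case/and5P=> fN eN fe _ /andP[_ dep_fe].
have subfe : [set f; e] \subset ground M :\: X.
  by rewrite subUset !sub1set fN eN.
by have := contract_dep_rank subfe dep_fe; rewrite cards2 fe.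
Qed.

End MatroidRank.

Lemma parallel_representative (T : finType) (N : matroid T) (D : {set T}) e :
  #|[set f in ground N :\: D | (f == e) || parallel N f e]| = 1 -> e \in D ->
  exists2 f, f \in ground N :\: D & parallel N f e.
Proof.
move=> /eqP/cards1P[f classE] eD.
have : f \in [set f in ground N :\: D | (f == e) || parallel N f e].
  by rewrite classE set11.
rewrite inE => /andP[fND /orP[/eqP fe | fe]]; last by exists f.
by move: fND; rewrite fe inE eD.
Qed.

Section ContractClaw.
Variables (T : finType) (M : matroid T) (X D F : {set T}).
Hypotheses (matroidM : is_matroid M) (simpleM : simple M).
Local Notation N := (contract M X).
Hypothesis classD : forall e, e \in ground N -> ~~ is_loop N e ->
  #|[set f in ground N :\: D | (f == e) || parallel N f e]| = 1.
Hypotheses (flatF : flat (delete N D) F) (indepF : indep (delete N D) F).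

Let indepNF : indep N F. Proof. by case/andP: indepF. Qed.

Lemma claw_contract_rank : rank M (F :|: X) = #|F| + rank M X.
Proof. by case/andP: indepNF => _ /eqP. Qed.

Lemma claw_contract_indep : indep M F.
Proof. exact: contract_indep_indep indepNF. Qed.

Lemma claw_contract_rank_setU1 e : e \in ground N :\: D :\: F ->
  rank M (e |: F :|: X) = (#|F|).+1 + rank M X.
Proof.
move=> eNF; have indep0 : indep (delete N D) set0.
  by rewrite /= !sub0set set0U cards0 eqxx.
have /andP[/andP[_ /eqP ->] _] := flat_indep_setU1 indep0 flatF indepF eNF.
by rewrite cardsU1; move: eNF; rewrite inE => /andP[/negPf ->].
Qed.

Section Element.
Variable e : T.
Hypotheses (eE : e \in ground M) (eF : e \notin F).

Let indep_e : indep M [set e].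
Proof. by have := simpleM eE eE; rewrite setUid. Qed.

Lemma claw_span_closure_lt : rank M (e |: X) <= rank M X ->
  #|F| < rank M (e |: F).
Proof.
move=> spanX; rewrite ltnNge; apply/negP => spanF.
have := rank_setU_indep_common matroidM F X indep_e.
have := rank_mono M (subsetUr [set e] X).
rewrite cards1 claw_contract_rank; lia.
Qed.

Lemma claw_span_simplification_lt : e \in ground N :\: D ->
  #|F| < rank M (e |: F).
Proof.
move=> eND; rewrite ltnNge; apply/negP => spanF.
have := claw_contract_rank_setU1 (e := e); rewrite inE eF eND => /(_ isT).
have := rank_setU_leq matroidM (e |: F) X; lia.
Qed.

Lemma claw_span_parallel_lt f : f \in ground N :\: D -> parallel N f e ->
  #|F| < rank M (e |: F).
Proof.
move=> fND parfe; rewrite ltnNge; apply/negP => spanF.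
have rank_fe := contract_parallel_rank matroidM parfe.
have [fN _ fe _ _] := and5P parfe.
have fE : f \in ground M by move: fN; rewrite inE => /andP[].
have [fF | fF] := boolP (f \in F).
  have := rank_setU_indep_common matroidM F X (simpleM fE eE).
  have subfeF : [set f; e] :|: F \subset e |: F.
    by rewrite !subUset !sub1set !inE eqxx fF orbT subsetUr.
  have := rank_mono M subfeF.
  rewrite cards2 fe claw_contract_rank; lia.
have := rank_setU_indep_common matroidM F (f |: X) indep_e.
rewrite cards1 (setUCA F) (setUCA [set e]).
have := claw_contract_rank_setU1 (e := f); rewrite inE fF fND => /(_ isT).
by move: rank_fe; rewrite -!setUA; lia.
Qed.

Lemma claw_contract_span_lt : #|F| < rank M (e |: F).
Proof.
have [eX | eX] := boolP (e \in X).
  by apply: claw_span_closure_lt; rewrite (setUidPr _) ?sub1set.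
have eN : e \in ground N by rewrite inE eX eE.
have [loop_e | nonloop_e] := boolP (is_loop N e).
  exact/claw_span_closure_lt/contract_loop_rank.
have [eD | eD] := boolP (e \in D); last first.
  by apply: claw_span_simplification_lt; rewrite inE eD eN.
have [f fND parfe] := parallel_representative (classD eN nonloop_e) eD.
exact: claw_span_parallel_lt fND parfe.
Qed.

End Element.

Lemma claw_contract_flat : flat M F.
Proof.
have [subF _] := flatF.
split=> [|e /setDP[eE eF]].
  exact: subset_trans subF (subset_trans (subsetDl _ _) (subsetDl _ _)).
have rankF := rank_indep claw_contract_indep.
apply/eqP; rewrite eqn_leq {2}rankF claw_contract_span_lt // andbT.
exact: rank_setU1_leq.
Qed.

End ContractClaw.

Theorem lemma2p1 (T : finType) (M : matroid T) (X : {set T}) (k : nat) :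
  1 <= k -> is_matroid M -> simple M -> X \subset ground M ->
  forall F : {set T}, pseudoclaw (contract M X) k F -> claw M k F.
Proof.
move=> _ matroidM simpleM _ F [_ [D [-> _ _ classD]] [flatF indepF cardF]].
split=> //.
  exact: claw_contract_flat matroidM simpleM classD flatF indepF.
exact: claw_contract_indep matroidM indepF.
Qed.
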